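(* Let $\mathbb P$ be the law of a stationary simple point process on $\mathbb R^d$ with finite positive intensity $m$ and $\mathbb P(\xi\ne\emptyset)=1$. Suppose Condition $C(\alpha)$ holds for some $\alpha>0$ and $\rho_\gamma<+\infty$ for some $\gamma>1$. Then there is a constant $C_0>0$ such that $$\sup_{x\in\mathbb R^d}\mathbb P_0\big(\xi(\Lambda_\ell(x))=0\big)\le C_0\ell^{-\alpha/\gamma'}\qquad\forall\ell>0,$$ where $\gamma'=\frac{\gamma}{\gamma-1}$.
   Context: $\mathcal N$ = locally finite subsets of $\mathbb R^d$, identified with counting measures ($\xi(A)=\#(\xi\cap A)$); $\tau_x\xi=\xi-x$; stationarity: $\mathbb P(\tau_xA)=\mathbb P(A)$; $m=\mathbb E[\xi([0,1]^d)]$. $\Lambda_\ell(x)=x+[-\ell,\ell]^d$, $\Lambda_\ell=\Lambda_\ell(0)$. $\rho_\gamma=\mathbb E[\xi([0,1]^d)^\gamma]$. Palm distribution $\mathbb P_0(A)=\frac1m\int d\mathbb P(\xi)\sum_{x\in\xi\cap[0,1]^d}\mathbf 1_A(\tau_x\xi)$. Condition $C(\alpha)$: $\exists\kappa>0$ with $\mathbb P(\xi(\Lambda_\ell)=0)\le\kappa\ell^{-\alpha}$ for all $\ell\ge1$. *)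

From HB Require Import structures.
From mathcomp Require Import all_boot all_order all_algebra.
From mathcomp Require Import all_classical all_reals all_analysis.
Set Implicit Arguments. Unset Strict Implicit. Unset Printing Implicit Defensive.
Import Order.TTheory GRing.Theory Num.Theory.
Local Open Scope classical_set_scope.
Local Open Scope ring_scope.

(* Points of R^d are row vectors 'rV[R]_d; configurations are subsets of R^d
   (simple point processes: a configuration is identified with its
   counting measure xi(A) = #(xi \cap A)). *)
Section PP.
Variables (R : realType) (d : nat).
Local Notation pt := 'rV[R]_d.

Definition box (a b : pt) : set pt :=
  [set y | forall i, a 0 i <= y 0 i <= b 0 i].

Definition Lam (l : R) (x : pt) : set pt :=
  [set y | forall i, x 0 i - l <= y 0 i <= x 0 i + l].

Definition unit_cube : set pt := [set y | forall i, 0 <= y 0 i <= 1].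

Definition cnt (xi A : set pt) : \bar R := counting (xi `&` A).

Definition tau (x : pt) (xi : set pt) : set pt := [set y - x | y in xi].

Definition locally_finite (xi : set pt) : Prop :=
  forall l : R, finite_set (xi `&` Lam l 0).

Definition cnt_events : set (set (set pt)) :=
  [set E | exists a b (k : \bar R), E = [set xi | cnt xi (box a b) = k]].

End PP.

Definition Config (R : realType) (d : nat) :=
  g_sigma_algebraType (@cnt_events R d).

Definition palm (R : realType) (d : nat) (P : probability (Config R d) R)
  (m : R) (A : set (Config R d)) : \bar R :=
  ((m^-1)%:E * \int[P]_xi
     (\esum_(x in (xi : set 'rV[R]_d) `&` @unit_cube R d)
        (\1_A (tau x xi : Config R d))%:E))%E.

From HB Require Import structures.
From mathcomp Require Import all_boot all_order all_algebra.
From mathcomp Require Import all_classical all_reals all_analysis.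
From mathcomp Require Import measurable_realfun lra ring.
Set Implicit Arguments. Unset Strict Implicit. Unset Printing Implicit Defensive.
Import Order.TTheory GRing.Theory Num.Theory.
Local Open Scope classical_set_scope.
Local Open Scope ring_scope.

(* If y is a point of xi in the unit cube and the shifted configuration xi - y
   has no point in Lambda_l(x), then xi has no point in Lambda_(l-1)(x).  By
   the definition of the Palm distribution, P_0(xi(Lambda_l(x)) = 0) is then
   at most m^-1 E[1_F xi([0,1]^d)] with F = {xi(Lambda_(l-1)(x)) = 0}, and
   P(F) <= kappa (l-1)^-alpha by stationarity and C(alpha).  Instead of
   Hoelder's inequality we integrate the Young-type bound
   a <= t^(1-gamma) a^gamma + t (for a >= 0), with t = P(F)^(-1/gamma); this
   gives E[1_F xi([0,1]^d)] <= P(F)^(1/gamma') (rho_gamma + 1).  For l < 2 the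
   trivial bound P_0 <= 1 suffices. *)

Lemma le_powR_young (R : realType) (g t a : R) :
  1 <= g -> 0 < t -> 0 <= a -> a <= t `^ (1 - g) * a `^ g + t.
Proof.
move=> g_ge1 t_gt0 a_ge0.
have [a_le_t|t_lt_a] := leP a t.
  by rewrite (le_trans a_le_t) // lerDr mulr_ge0 // powR_ge0.
have a_gt0 : 0 < a by exact: lt_trans t_gt0 t_lt_a.
suff : a <= t `^ (1 - g) * a `^ g by move/le_trans; apply; rewrite lerDl (ltW t_gt0).
have -> : a `^ g = a * a `^ (g - 1).
  rewrite -{2}(powRr1 (ltW a_gt0)) -powRD ?(gt_eqF a_gt0) ?implybT //.
  by rewrite addrC subrK.
rewrite mulrCA ler_peMr // -opprB powRN ler_pdivlMl ?powR_gt0 // mulr1.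
by apply: ge0_ler_powR; rewrite ?nnegrE ?subr_ge0 ?(ltW t_gt0) ?(ltW t_lt_a).
Qed.

Lemma le_mule_young (R : realType) (g t : R) (b : bool) (v : \bar R) :
  1 <= g -> 0 < t -> (0 <= v)%E ->
  (b%:R%:E * v <= (t `^ (1 - g))%:E * v `^ g + t%:E * b%:R%:E)%E.
Proof.
move=> g_ge1 t_gt0 v_ge0; case: b; last first.
  by rewrite mul0e mule0 adde0 mule_ge0 ?lee_fin ?powR_ge0 ?poweR_ge0.
rewrite mul1e mule1; case: v v_ge0 => [a| |] //; rewrite ?lee_fin => a_ge0.
  exact: le_powR_young.
rewrite poweRyr ?gt_eqF ?(lt_le_trans ltr01) // mulry gtr0_sg ?powR_gt0 //.
by rewrite mul1e addye.
Qed.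

Section nonneg_integral.
Local Open Scope ereal_scope.
Context d (T : measurableType d) (R : realType) (mu : {measure set T -> \bar R}).

(* The integrand in the definition of [palm] is not known to be measurable,
   so [ge0_le_integral] does not apply to it. *)
Lemma ge0_le_integral_nonmeasurable (f g : T -> \bar R) :
  (forall x, 0 <= f x) -> (forall x, f x <= g x) ->
  \int[mu]_x f x <= \int[mu]_x g x.
Proof.
move=> f_ge0 f_le_g.
have g_ge0 x : 0 <= g x by exact: le_trans (f_ge0 x) (f_le_g x).
rewrite !ge0_integralTE //; apply: ereal_sup_le => _ [h h_le_f <-].
by exists h => // x; exact: le_trans (h_le_f x) (f_le_g x).
Qed.

Variables (F : set T) (N : T -> \bar R) (g : R).
Hypotheses (mF : measurable F) (mN : measurable_fun [set: T] N)
  (N_ge0 : forall x, 0 <= N x) (g_ge1 : (1 <= g)%R).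

Lemma integral_indic_mule_young (t : R) : (0 < t)%R ->
  \int[mu]_x ((\1_F x)%:E * N x) <=
    (t `^ (1 - g))%:E * \int[mu]_x N x `^ g + t%:E * mu F.
Proof.
move=> t_gt0.
have mI : measurable_fun setT (fun x => (\1_F x)%:E : \bar R).
  exact/measurable_EFinP/measurable_indic.
have mNg : measurable_fun setT (fun x => N x `^ g).
  exact: measurableT_comp (measurable_poweR g) mN.
have mNgZ : measurable_fun setT (fun x => (t `^ (1 - g))%:E * N x `^ g).
  by apply: emeasurable_funM => //; exact: measurable_cst.
have mIZ : measurable_fun setT (fun x => t%:E * (\1_F x)%:E).
  by apply: emeasurable_funM => //; exact: measurable_cst.
have I_ge0 x : 0 <= (\1_F x)%:E :> \bar R by rewrite lee_fin indicE.
have NgZ_ge0 x : 0 <= (t `^ (1 - g))%:E * N x `^ g.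
  by rewrite mule_ge0 ?lee_fin ?powR_ge0 ?poweR_ge0.
have pointwise x : (\1_F x)%:E * N x <=
    (t `^ (1 - g))%:E * N x `^ g + t%:E * (\1_F x)%:E.
  by rewrite indicE; apply: le_mule_young.
apply: le_trans (ge0_le_integral mu measurableT _ _ _ (fun x _ => pointwise x)) _.
- by move=> x _; rewrite mule_ge0.
- exact: emeasurable_funM.
- exact: emeasurable_funD.
rewrite ge0_integralD // => [|x _]; last by rewrite mule_ge0 // lee_fin (ltW t_gt0).
rewrite ge0_integralZl_EFin ?powR_ge0 // => [|x _]; last by rewrite poweR_ge0.
by rewrite ge0_integralZl_EFin ?integral_indic ?setIT // (ltW t_gt0).
Qed.

Lemma integral_indic_mule_le_powR (q : R) : (0 < q)%R -> mu F <= q%:E ->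
  \int[mu]_x ((\1_F x)%:E * N x) <=
    (q `^ (1 - g^-1))%:E * (\int[mu]_x N x `^ g + 1).
Proof.
move=> q_gt0 muF_le_q.
have g_gt0 : (0 < g)%R by exact: lt_le_trans ltr01 g_ge1.
have q_exp : ((q `^ (- g^-1)) `^ (1 - g) = q `^ (1 - g^-1))%R.
  by rewrite -powRrM; congr (_ `^ _)%R; field; rewrite gt_eqF.
have q_mul : (q `^ (- g^-1) * q = q `^ (1 - g^-1))%R.
  rewrite -{2}(powRr1 (ltW q_gt0)) -powRD ?(gt_eqF q_gt0) ?implybT //.
  by congr (_ `^ _)%R; ring.
apply: le_trans (integral_indic_mule_young (powR_gt0 (- g^-1) q_gt0)) _.
have int_ge0 : 0 <= \int[mu]_x N x `^ g.
  by apply: integral_ge0 => x _; exact: poweR_ge0.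
rewrite q_exp [X in _ <= X]muleDr //; last by apply: ge0_adde_def; rewrite inE ?lee01.
by apply: leeD2l; rewrite mule1 -q_mul EFinM lee_wpmul2l // lee_fin powR_ge0.
Qed.

End nonneg_integral.

Lemma counting_eq0 (T : choiceType) (R : realType) (X : set T) :
  (counting X = 0 :> \bar R)%E <-> X = set0.
Proof.
split; last by move=> ->; rewrite /counting asboolT // fset_set0.
rewrite /counting; case: asboolP => // finX /(congr1 fine) /= /eqP.
by rewrite pnatr_eq0 finmap.cardfs_eq0 => /eqP; exact: fset_set_set0.
Qed.

Lemma esum_le_counting (T : choiceType) (R : realType) (S : set T)
    (a : T -> \bar R) :
  (forall i, 0 <= a i)%E -> (forall i, a i <= 1)%E ->
  (\esum_(i in S) a i <= counting S)%E.
Proof.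
move=> a_ge0 a_le1.
have [finS|infS] := pselect (finite_set S); last by rewrite /counting asboolF ?leey.
rewrite esum_fset // fsbig_finite // /counting asboolT //.
rewrite -sum1_size natr_sum -sumEFin.
exact: lee_sum.
Qed.

Lemma powRN_le_mul (R : realType) (b c u l : R) :
  0 <= b -> 0 < c -> 0 < u -> 0 < l -> l <= c * u ->
  u `^ (- b) <= c `^ b * l `^ (- b).
Proof.
move=> b_ge0 c_gt0 u_gt0 l_gt0 l_le_cu.
rewrite !powRN ler_pdivlMr ?powR_gt0 // mulrC ler_pdivrMr ?powR_gt0 //.
have cu_gt0 := mulr_gt0 c_gt0 u_gt0.
rewrite -powRM ?(ltW c_gt0) ?(ltW u_gt0) //.
by apply: ge0_ler_powR; rewrite ?nnegrE ?(ltW l_gt0) ?(ltW cu_gt0).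
Qed.

Section point_process.
Variables (R : realType) (d : nat).
Local Notation pt := 'rV[R]_d.
Local Notation config := (Config R d).
Local Notation cube := (@unit_cube R d).

Definition void (l : R) (x : pt) : set config :=
  [set xi : config | cnt xi (Lam l x) = 0%E].

Lemma Lam_box (l : R) (x : pt) : Lam l x = box (x - const_mx l) (x + const_mx l).
Proof. by apply/seteqP; split => y /= H i; have := H i; rewrite !mxE. Qed.

Lemma unit_cube_box : cube = box (const_mx 0) (const_mx 1).
Proof. by apply/seteqP; split => y /= H i; have := H i; rewrite !mxE. Qed.

Lemma cnt_ge0 (xi A : set pt) : (0 <= cnt xi A)%E.
Proof. by rewrite /cnt /counting; case: ifP; rewrite ?lee_fin ?leey. Qed.

Lemma cnt_eq0 (xi A : set pt) : cnt xi A = 0%E <-> (forall y, xi y -> ~ A y).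
Proof.
rewrite /cnt counting_eq0; split => [xiA0 y xi_y Ay|xiA].
  by have : (xi `&` A) y by []; rewrite xiA0.
by apply/seteqP; split => // y [] /xiA.
Qed.

Lemma tauE (x : pt) (xi : set pt) : tau x xi = [set z | xi (z + x)].
Proof.
apply/seteqP; split => [_ [y xi_y <-]|z xi_zx] /=; first by rewrite subrK.
by exists (z + x); rewrite ?addrK.
Qed.

Lemma measurable_cnt_box (a b : pt) :
  measurable_fun [set: config] (fun xi : config => cnt xi (box a b)).
Proof.
pose v n : \bar R := if n is k.+1 then k%:R%:E else +oo%E.
have cnt_v (xi : set pt) : exists n, cnt xi (box a b) = v n.
  rewrite /cnt /counting; case: asboolP => _; last by exists 0%N.
  by exists (size (finmap.enum_fset (fset_set (xi `&` box a b)))).+1.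
move=> _ B mB; rewrite setTI.
have -> : (fun xi : config => cnt xi (box a b)) @^-1` B =
    \bigcup_(n in [set n | B (v n)]) [set xi : config | cnt xi (box a b) = v n].
  apply/seteqP; split => [xi /= B_xi|xi [n /= Bn ->]] //.
  by have [n cnt_n] := cnt_v xi; exists n; rewrite /= -?cnt_n.
by apply: bigcup_measurable => n _; apply: sub_sigma_algebra; exists a, b, (v n).
Qed.

Lemma measurable_void (l : R) (x : pt) : measurable (void l x).
Proof. by rewrite /void Lam_box; apply: sub_sigma_algebra; eexists _, _, _. Qed.

Lemma void_tau (l : R) (x y : pt) (xi : config) :
  void l x (tau y xi : config) <-> void l (x + y) xi.
Proof.
rewrite /void /= !cnt_eq0 tauE; split => void_xi z xi_z Lz.
  by apply: (void_xi (z - y)); rewrite /= ?subrK // => i; have := Lz i; rewrite !mxE; lra.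
by apply: (void_xi _ xi_z) => i; have := Lz i; rewrite !mxE; lra.
Qed.

Lemma void_sub (l l' : R) (x x' : pt) :
  Lam l' x' `<=` Lam l x -> void l x `<=` void l' x'.
Proof. by move=> sub_L xi; rewrite /void /= !cnt_eq0 => void_xi y /void_xi + /sub_L. Qed.

Lemma void_stationary (P : probability config R) :
  (forall (x : pt) (A : set config), measurable A ->
     P ((fun xi : config => (tau x (xi : set pt) : config)) @` A) = P A) ->
  forall (l : R) (x : pt), P (void l x) = P (void l 0).
Proof.
move=> Hstat l x; rewrite -(Hstat (- x) _ (measurable_void l 0)); congr (P _).
apply/seteqP; split => [zeta void_zeta|_ [xi void_xi <-]].
  exists (tau x zeta : config); first by apply/void_tau; rewrite add0r.
  by rewrite !tauE; apply/seteqP; split => z /=; rewrite subrK.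
by apply/void_tau; rewrite subrr.
Qed.

Lemma palm_le_integral_indic (P : probability config R) (m : R) (E F : set config) :
  0 < m ->
  (forall (xi : config) y, (xi : set pt) y -> cube y -> E (tau y xi) -> F xi) ->
  (palm P m E <= (m^-1)%:E * \int[P]_xi ((\1_F xi)%:E * cnt xi cube))%E.
Proof.
move=> m_gt0 EF; apply: lee_wpmul2l; first by rewrite lee_fin invr_ge0 (ltW m_gt0).
apply: ge0_le_integral_nonmeasurable => xi; first exact: esum_ge0.
have [F_xi|nF_xi] := pselect (F xi).
  rewrite indicE mem_set // mul1e.
  by apply: esum_le_counting => y; rewrite lee_fin indicE ?lern1 ?leq_b1.
rewrite indicE memNset // mul0e esum1 // => y [xi_y cube_y].
by rewrite indicE memNset // => /(EF _ _ xi_y cube_y).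
Qed.

Lemma palm_le1 (P : probability config R) (m : R) (E : set config) :
  0 < m -> (\int[P]_xi cnt xi cube = m%:E)%E -> (palm P m E <= 1)%E.
Proof.
move=> m_gt0 Hm; apply: le_trans (palm_le_integral_indic P (F := setT) m_gt0 _) _ => //.
under eq_integral do rewrite indicT mul1e.
by rewrite Hm -EFinM mulVf ?gt_eqF.
Qed.

Lemma palm_void_le (P : probability config R) (m gamma q l : R) (x : pt) :
  0 < m -> 1 <= gamma -> 0 < q -> (P (void (l - 1) x) <= q%:E)%E ->
  (palm P m (void l x) <= (m^-1 * q `^ (1 - gamma^-1))%:E *
     (\int[P]_xi cnt xi cube `^ gamma + 1))%E.
Proof.
move=> m_gt0 gamma_ge1 q_gt0 PF.
have void_shift (xi : config) y : cube y -> void l x (tau y xi) -> void (l - 1) x xi.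
  move=> cube_y /void_tau; apply: void_sub => z Lz i.
  by have := Lz i; have := cube_y i; rewrite !mxE; lra.
apply: le_trans (palm_le_integral_indic P m_gt0 (fun xi y _ => void_shift xi y)) _.
rewrite EFinM -muleA; apply: lee_wpmul2l; first by rewrite lee_fin invr_ge0 (ltW m_gt0).
apply: integral_indic_mule_le_powR => //; first exact: measurable_void.
- by rewrite unit_cube_box; exact: measurable_cnt_box.
- by move=> xi; exact: cnt_ge0.
Qed.

End point_process.

Theorem lemma10p3 (R : realType) (d : nat) (d_gt0 : (0 < d)%N)
  (P : probability (Config R d) R) (m alpha gamma : R)
  (* a.s. locally finite configurations *)
  (Hlf : {ae P, forall xi : Config R d, locally_finite xi})
  (* stationarity: P(tau_x A) = P(A) for all measurable events A *)
  (Hstat : forall (x : 'rV[R]_d) (A : set (Config R d)),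
      measurable A -> P ((fun xi : Config R d => (tau x (xi : set 'rV[R]_d) : Config R d)) @` A) = P A)
  (* finite positive intensity m = E[xi([0,1]^d)] *)
  (Hm : (\int[P]_xi cnt xi (@unit_cube R d) = m%:E)%E)
  (m_gt0 : 0 < m)
  (* P(xi <> empty) = 1 *)
  (Hne : P [set xi : Config R d | xi <> set0] = 1%E)
  (* condition C(alpha) *)
  (alpha_gt0 : 0 < alpha)
  (HC : exists2 kappa : R, 0 < kappa & forall l : R, 1 <= l ->
      (P [set xi : Config R d | cnt xi (Lam l 0) = 0%E] <= (kappa * l `^ (- alpha))%:E)%E)
  (* rho_gamma < +oo for some gamma > 1 *)
  (gamma_gt1 : 1 < gamma)
  (Hrho : (\int[P]_xi (cnt xi (@unit_cube R d) `^ gamma) < +oo)%E) :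
  exists2 C0 : R, 0 < C0 & forall l : R, 0 < l -> forall x : 'rV[R]_d,
    (palm P m [set xi : Config R d | cnt xi (Lam l x) = 0%E]
       <= (C0 * l `^ (- (alpha / (gamma / (gamma - 1)))))%:E)%E.
Proof.
case: HC => kappa kappa_gt0 HC.
set rho := (\int[P]_xi (cnt xi (@unit_cube R d) `^ gamma))%E.
set beta := alpha / (gamma / (gamma - 1)).
have beta_ge0 : 0 <= beta by rewrite ltW // !divr_gt0 // ?subr_gt0 // (lt_trans ltr01).
have betaE : beta = alpha * (1 - gamma^-1).
  by rewrite /beta; field; rewrite !gt_eqF ?subr_gt0 // (lt_trans ltr01).
have rho_ge0 : (0 <= rho)%E by apply: integral_ge0 => xi _; exact: poweR_ge0.
have rhoE : rho = (fine rho)%:E by rewrite fineK // ge0_fin_numE.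
set s := m^-1 * (kappa `^ (1 - gamma^-1) * (fine rho + 1)).
have s_ge0 : 0 <= s.
  by rewrite !mulr_ge0 ?invr_ge0 ?powR_ge0 ?addr_ge0 ?fine_ge0 ?(ltW m_gt0).
exists (2 `^ beta * (1 + s)) => [|l l_gt0 x]; first by rewrite mulr_gt0 ?powR_gt0 // ltr_pwDl.
have decay u : 0 < u -> l <= 2 * u -> u `^ (- beta) <= 2 `^ beta * l `^ (- beta).
  by move=> u_gt0; apply: powRN_le_mul.
have Cl_ge0 : 0 <= 2 `^ beta * l `^ (- beta) by rewrite mulr_ge0 ?powR_ge0.
have [l_lt2|l_ge2] := ltP l 2.
  apply: le_trans (palm_le1 _ m_gt0 Hm) _; rewrite lee_fin.
  have := decay 1 ltr01; rewrite powR1 mulr1 => /(_ (ltW l_lt2)).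
  by nra.
have PF : (P (void (l - 1) x) <= (kappa * (l - 1) `^ (- alpha))%:E)%E.
  by rewrite void_stationary //; apply: HC; lra.
apply: le_trans (palm_void_le m_gt0 (ltW gamma_gt1) _ PF) _.
  by rewrite mulr_gt0 ?powR_gt0 //; lra.
rewrite -/rho rhoE -EFinD -EFinM lee_fin.
rewrite powRM ?powR_ge0 ?(ltW kappa_gt0) // -powRrM mulNr -betaE.
have := decay (l - 1) ltac:(lra) ltac:(lra).
have -> : m^-1 * (kappa `^ (1 - gamma^-1) * (l - 1) `^ (- beta)) * (fine rho + 1) =
    s * (l - 1) `^ (- beta) by rewrite /s; ring.
by nra.
Qed.
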